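(* Let $R$ be a ring, let $T$ be a left denominator set of $R$ with $\mathrm{ass}(T)=0$, and let $\sigma:R\to T^{-1}R$, $r\mapsto\frac{r}{1}$. Then: (1) $T\subseteq S$ for all $S\in\max\mathrm{Den}_l(R)$; (2) the map $\max\mathrm{Den}_l(R)\to\max\mathrm{Den}_l(T^{-1}R)$, $S\mapsto\widetilde{S}$, is a bijection with inverse $\mathcal{T}\mapsto\sigma^{-1}(\mathcal{T})$, where $\widetilde{S}$ is the multiplicative monoid generated in $T^{-1}R$ by $\sigma(S)$ and $\{t^{-1}: t\in T\}$; moreover $S^{-1}R\cong\widetilde{S}^{-1}(T^{-1}R)$.
   Context: All rings are associative with $1$. A multiplicative subset $S$ of $R$ ($1\in S$, $0\notin S$, closed under multiplication) is a left Ore set if $Sr\cap Rs\neq\emptyset$ for all $r\in R$, $s\in S$; for it, $\mathrm{ass}(S):=\{r\in R: sr=0\text{ for some } s\in S\}$. A left Ore set $S$ is a left denominator set if $rs=0$ ($r\in R$, $s\in S$) implies $tr=0$ for some $t\in S$; $S^{-1}R$ is the left localization. $\max\mathrm{Den}_l(R)$ is the set of maximal elements, under inclusion, of the set of left denominator sets of $R$. *)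

From HB Require Import structures.
From mathcomp Require Import all_boot all_algebra.
Set Implicit Arguments. Unset Strict Implicit. Unset Printing Implicit Defensive.
Import GRing.Theory.
Local Open Scope ring_scope.

Definition mult_subset (R : nzRingType) (S : R -> Prop) : Prop :=
  S 1 /\ ~ S 0 /\ (forall a b, S a -> S b -> S (a * b)).

Definition left_ore (R : nzRingType) (S : R -> Prop) : Prop :=
  mult_subset S /\
  (forall (r s : R), S s -> exists s' r', S s' /\ s' * r = r' * s).

Definition ass (R : nzRingType) (S : R -> Prop) (r : R) : Prop :=
  exists s, S s /\ s * r = 0.

Definition left_den (R : nzRingType) (S : R -> Prop) : Prop :=
  left_ore S /\
  (forall (r s : R), S s -> r * s = 0 -> exists t, S t /\ t * r = 0).

Definition maxDen_l (R : nzRingType) (S : R -> Prop) : Prop :=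
  left_den S /\
  (forall S' : R -> Prop, left_den S' -> (forall x, S x -> S' x) ->
     forall x, S' x -> S x).

Definition is_inverse (A : nzRingType) (u a : A) : Prop :=
  u * a = 1 /\ a * u = 1.

Definition is_left_localization (R A : nzRingType) (S : R -> Prop)
    (f : {rmorphism R -> A}) : Prop :=
  (forall s, S s -> exists u, is_inverse u (f s)) /\
  (forall a : A, exists s r, S s /\ f s * a = f r) /\
  (forall r, f r = 0 <-> ass S r).

Inductive tilde (R Q : nzRingType) (T S : R -> Prop) (sigma : {rmorphism R -> Q})
  : Q -> Prop :=
  | tilde_one : tilde T S sigma 1
  | tilde_img s : S s -> tilde T S sigma (sigma s)
  | tilde_inv t u : T t -> is_inverse u (sigma t) -> tilde T S sigma u
  | tilde_mul a b : tilde T S sigma a -> tilde T S sigma b -> tilde T S sigma (a * b).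

Definition preim_set (R Q : nzRingType) (sigma : {rmorphism R -> Q})
  (TT : Q -> Prop) : R -> Prop := fun r => TT (sigma r).

From HB Require Import structures.
From mathcomp Require Import all_boot all_algebra.
From Stdlib Require Import ClassicalEpsilon FunctionalExtensionality PropExtensionality.

Set Implicit Arguments.
Unset Strict Implicit.
Unset Printing Implicit Defensive.

Import GRing.Theory.
Local Open Scope ring_scope.

(* Since ass(T) = 0, adjoining T to a left denominator set S keeps it a left
   denominator set, so a maximal S contains T.  A maximal S is moreover
   saturated with respect to T: ts in S or st in S with t in T forces s in S.
   Hence tilde S is exactly the set of fractions sigma(t)^{-1} sigma(s), and
   sigma^{-1}(tilde S) = S.  Conversely a maximal denominator set of T^{-1}R
   contains all units, in particular every sigma(t)^{-1}, so it is generated by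
   its preimage under sigma.  Finally the composite R -> T^{-1}R ->
   (tilde S)^{-1}(T^{-1}R) is a left localization of R at S, and left
   localizations are unique up to isomorphism. *)

Lemma left_den_intro (R : nzRingType) (S : R -> Prop) :
  S 1 -> ~ S 0 -> (forall a b, S a -> S b -> S (a * b)) ->
  (forall r s, S s -> exists s' r', S s' /\ s' * r = r' * s) ->
  (forall r s, S s -> r * s = 0 -> exists t, S t /\ t * r = 0) ->
  left_den S.
Proof. by move=> S1 S0 SM Sore Sann; do !split. Qed.

Section LeftDenominatorSets.
Variables (R : nzRingType) (S : R -> Prop).
Hypothesis HS : left_den S.

Lemma left_den1 : S 1.
Proof. by case: HS => [[[]]]. Qed.

Lemma left_den_neq0 : ~ S 0.
Proof. by case: HS => [[[_ []]]]. Qed.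

Lemma left_denM a b : S a -> S b -> S (a * b).
Proof. by case: HS => [[[_ [_ SM]] _] _]; apply: SM. Qed.

Lemma left_den_ore r s : S s -> exists s' r', S s' /\ s' * r = r' * s.
Proof. by case: HS => [[_ Sore] _]; apply: Sore. Qed.

Lemma left_den_ann r s : S s -> r * s = 0 -> exists t, S t /\ t * r = 0.
Proof. by case: HS => _ Sann; apply: Sann. Qed.

End LeftDenominatorSets.

Lemma maxDen_l_den (R : nzRingType) (S : R -> Prop) : maxDen_l S -> left_den S.
Proof. by case. Qed.

Lemma linv_lcancel (R : nzRingType) (x u a b : R) :
  u * x = 1 -> x * a = x * b -> a = b.
Proof. by move=> ux1 xab; rewrite -(mul1r a) -(mul1r b) -ux1 -!mulrA xab. Qed.

Section LeftLocalizations.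
Variables (R A : nzRingType) (S : R -> Prop) (f : {rmorphism R -> A}).
Hypothesis Hf : is_left_localization S f.

Lemma loc_unit s : S s -> exists u, is_inverse u (f s).
Proof. by case: Hf => Hunit _; apply: Hunit. Qed.

Lemma loc_frac a : exists s r, S s /\ f s * a = f r.
Proof. by case: Hf => _ [Hfrac _]; apply: Hfrac. Qed.

Lemma loc_ker r : f r = 0 <-> ass S r.
Proof. by case: Hf => _ [_ Hker]; apply: Hker. Qed.

Lemma loc_cancel s a b : S s -> f s * a = f s * b -> a = b.
Proof. by move=> /loc_unit [u [uf1 _]]; apply: linv_lcancel uf1. Qed.

Lemma loc_common_frac (HS : left_den S) a1 a2 :
  exists s r1 r2, S s /\ f s * a1 = f r1 /\ f s * a2 = f r2.
Proof.
have [s1 [r1 [Ss1 E1]]] := loc_frac a1.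
have [s2 [r2 [Ss2 E2]]] := loc_frac a2.
have [s3 [r3 [Ss3 E3]]] := left_den_ore HS s1 Ss2.
exists (s3 * s1), (s3 * r1), (r3 * r2); split; first exact: left_denM.
by rewrite !rmorphM -!mulrA E1 -E2 !mulrA -!rmorphM E3.
Qed.

End LeftLocalizations.

Section LocalizationUniqueness.
Variables (R A B : nzRingType) (S : R -> Prop).
Variables (f : {rmorphism R -> A}) (g : {rmorphism R -> B}).
Hypotheses (HS : left_den S) (Hf : is_left_localization S f)
  (Hg : is_left_localization S g).

(* The fraction f(s)^{-1} f(r) is sent to g(s)^{-1} g(r); this is well defined
   because ker f = ass S = ker g. *)
Lemma loc_map_spec a :
  exists b, forall s r, S s -> f s * a = f r -> g s * b = g r.
Proof.
have [s1 [r1 [Ss1 E1]]] := loc_frac Hf a.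
have [u [_ gs1u]] := loc_unit Hg Ss1.
exists (u * g r1) => s r Ss E.
have [s3 [r3 [Ss3 E3]]] := left_den_ore HS s Ss1.
have f_eq0 : f (s3 * r - r3 * r1) = 0.
  by rewrite rmorphB !rmorphM -E -E1 !mulrA -!rmorphM E3 subrr.
move: f_eq0 => /(loc_ker Hf) /(loc_ker Hg).
rewrite rmorphB !rmorphM => /eqP; rewrite subr_eq0 => /eqP g_eq.
apply: (loc_cancel Hg Ss3).
by rewrite mulrA -rmorphM E3 rmorphM -mulrA (mulrA (g s1)) gs1u mul1r g_eq.
Qed.

Definition loc_map (a : A) : B :=
  proj1_sig (constructive_indefinite_description _ (loc_map_spec a)).

Lemma loc_mapP a s r : S s -> f s * a = f r -> g s * loc_map a = g r.
Proof. exact: (proj2_sig (constructive_indefinite_description _ (loc_map_spec a))). Qed.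

Lemma loc_map_is_zmod_morphism : zmod_morphism loc_map.
Proof.
move=> a1 a2; have [s [r1 [r2 [Ss [E1 E2]]]]] := loc_common_frac Hf HS a1 a2.
apply: (loc_cancel Hg Ss).
rewrite (@loc_mapP _ s (r1 - r2)) //; last by rewrite mulrBr E1 E2 rmorphB.
by rewrite mulrBr (loc_mapP Ss E1) (loc_mapP Ss E2) rmorphB.
Qed.

Lemma loc_map_is_monoid_morphism : monoid_morphism loc_map.
Proof.
have S1 := left_den1 HS.
split.
  by apply: (loc_cancel Hg S1); rewrite (@loc_mapP 1 1 1) // mulr1.
move=> a1 a2.
have [s1 [r1 [Ss1 E1]]] := loc_frac Hf a1.
have [s2 [r2 [Ss2 E2]]] := loc_frac Hf a2.
have [s3 [r3 [Ss3 E3]]] := left_den_ore HS r1 Ss2.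
have Ss : S (s3 * s1) by apply: left_denM.
apply: (loc_cancel Hg Ss).
rewrite (@loc_mapP _ _ (r3 * r2)) //; last first.
  by rewrite rmorphM mulrA -(mulrA (f s3)) E1 -rmorphM E3 rmorphM -mulrA E2 -rmorphM.
rewrite [g (s3 * s1)]rmorphM mulrA -(mulrA (g s3)) (loc_mapP Ss1 E1) -rmorphM E3.
by rewrite [g (r3 * s2)]rmorphM -mulrA (loc_mapP Ss2 E2) -rmorphM.
Qed.

End LocalizationUniqueness.

Lemma left_localization_unique (R A B : nzRingType) (S : R -> Prop)
    (f : {rmorphism R -> A}) (g : {rmorphism R -> B}) :
  left_den S -> is_left_localization S f -> is_left_localization S g ->
  exists h : {rmorphism A -> B}, bijective h.
Proof.
move=> HS Hf Hg.
pose h : {rmorphism A -> B} := HB.pack (loc_map HS Hf Hg)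
  (GRing.isZmodMorphism.Build _ _ _ (loc_map_is_zmod_morphism HS Hf Hg))
  (GRing.isMonoidMorphism.Build _ _ _ (loc_map_is_monoid_morphism HS Hf Hg)).
exists h, (loc_map HS Hg Hf) => [a | b].
- have [s [r [Ss E]]] := loc_frac Hf a.
  by apply: (loc_cancel Hf Ss); rewrite (loc_mapP HS Hg Hf Ss (loc_mapP HS Hf Hg Ss E)).
- have [s [r [Ss E]]] := loc_frac Hg b.
  by apply: (loc_cancel Hg Ss); rewrite (loc_mapP HS Hf Hg Ss (loc_mapP HS Hg Hf Ss E)).
Qed.

Inductive gen_monoid (R : nzRingType) (A B : R -> Prop) : R -> Prop :=
  | gen_monoid1 : gen_monoid A B 1
  | gen_monoidl x : A x -> gen_monoid A B x
  | gen_monoidr x : B x -> gen_monoid A B x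
  | gen_monoidM x y : gen_monoid A B x -> gen_monoid A B y -> gen_monoid A B (x * y).

(* It suffices to check the Ore and annihilator conditions on generators, with
   annihilators taken in a multiplicative W inside the monoid; 0 is not in the
   monoid because W avoids 0. *)
Lemma gen_monoid_left_den (R : nzRingType) (A B W : R -> Prop) :
  W 1 -> ~ W 0 -> (forall a b, W a -> W b -> W (a * b)) ->
  (forall w, W w -> gen_monoid A B w) ->
  (forall x, A x \/ B x -> forall r, exists m r', gen_monoid A B m /\ m * r = r' * x) ->
  (forall x, A x \/ B x -> forall r, r * x = 0 -> exists w, W w /\ w * r = 0) ->
  left_den (gen_monoid A B).
Proof.
move=> W1 W0 WM Wgen Hore Hann.
have ann_gen x : gen_monoid A B x -> forall r, r * x = 0 -> exists w, W w /\ w * r = 0.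
  elim=> {x} [r|x Ax|x Bx|x y _ IHx _ IHy r].
  - by rewrite mulr1 => ->; exists 1; rewrite mulr0.
  - by apply: Hann; left.
  - by apply: Hann; right.
  - rewrite mulrA => /IHy [w [Ww]]; rewrite mulrA => /IHx [w' [Ww' E]].
    by exists (w' * w); split; [apply: WM | rewrite -mulrA].
apply: left_den_intro.
- exact: gen_monoid1.
- move=> gen0; have [w [Ww]] := ann_gen _ gen0 1 (mul1r 0).
  by rewrite mulr1 => w0; apply: W0; rewrite -w0.
- exact: gen_monoidM.
- move=> r s Hs; elim: Hs r => {s} [|x Ax|x Bx|x y _ IHx _ IHy] r.
  + by exists 1, r; split; [exact: gen_monoid1 | rewrite mul1r mulr1].
  + by apply: Hore; left.
  + by apply: Hore; right.
  + have [m1 [r1 [Hm1 E1]]] := IHy r.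
    have [m2 [r2 [Hm2 E2]]] := IHx r1.
    exists (m2 * m1), r2; split; first exact: gen_monoidM.
    by rewrite -mulrA E1 mulrA E2 mulrA.
- move=> r s Hs /(ann_gen _ Hs) [w [Ww E]].
  by exists w; split; [apply: Wgen |].
Qed.

Lemma regular_den_sub_maxDen_l (R : nzRingType) (T S : R -> Prop) :
  left_den T -> (forall r, ass T r -> r = 0) -> maxDen_l S ->
  forall t, T t -> S t.
Proof.
move=> HT HassT [HS Smax] t Tt.
suff den_ST : left_den (gen_monoid S T).
  exact: (Smax _ den_ST (fun x Sx => gen_monoidl _ Sx) t (gen_monoidr _ Tt)).
apply: (@gen_monoid_left_den _ S T S).
- exact: left_den1 HS.
- exact: left_den_neq0 HS.
- exact: left_denM HS.
- exact: gen_monoidl.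
- move=> x [Sx|Tx] r.
  + have [s' [r' [Ss' E]]] := left_den_ore HS r Sx.
    by exists s', r'; split; [apply: gen_monoidl |].
  + have [t' [r' [Tt' E]]] := left_den_ore HT r Tx.
    by exists t', r'; split; [apply: gen_monoidr |].
- move=> x [Sx|Tx] r E; first exact: (left_den_ann HS Sx E).
  have [t' [Tt' E']] := left_den_ann HT Tx E.
  have -> : r = 0 by apply: HassT; exists t'.
  by exists 1; split; [exact: left_den1 HS | rewrite mulr0].
Qed.

(* The elements x with S (y * x) for some y and whose left annihilator is
   killed by S form a left denominator set containing S. *)
Lemma maxDen_l_saturated (R : nzRingType) (S : R -> Prop) : maxDen_l S ->
  forall x y, S (y * x) -> (forall r, r * x = 0 -> exists s, S s /\ s * r = 0) ->
  S x.
Proof.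
move=> [HS Smax] x y Syx annx.
pose S' x := (exists y, S (y * x)) /\
  (forall r, r * x = 0 -> exists s, S s /\ s * r = 0).
have S_S' z : S z -> S' z.
  by move=> Sz; split; [exists 1; rewrite mul1r | move=> r; apply: left_den_ann].
suff den_S' : left_den S' by exact: (Smax _ den_S' S_S' x (conj (ex_intro _ y Syx) annx)).
apply: left_den_intro.
- exact/S_S'/(left_den1 HS).
- by move=> [[y0]]; rewrite mulr0 => /(left_den_neq0 HS).
- move=> a b [[y1 Sa] anna] [[y2 Sb] annb]; split.
  + have [s3 [r3 [Ss3 E]]] := left_den_ore HS y2 Sa.
    exists (r3 * y1); rewrite mulrA -(mulrA r3) -E -!mulrA.
    by apply: left_denM; rewrite // mulrA.
  + move=> r; rewrite mulrA => /annb [s [Ss]]; rewrite mulrA => /anna [s' [Ss' E]].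
    by exists (s' * s); split; [apply: left_denM | rewrite -mulrA].
- move=> r z [[y0 Sz] _].
  have [s' [r' [Ss' E]]] := left_den_ore HS r Sz.
  by exists s', (r' * y0); split; [apply: S_S' | rewrite E mulrA].
- move=> r z [_ annz] /annz [s [Ss E]].
  by exists s; split; [apply: S_S' |].
Qed.

Definition unit_set (R : nzRingType) (x : R) : Prop := exists u, is_inverse u x.

Lemma unit_set_left_den (R : nzRingType) : left_den (@unit_set R).
Proof.
have unit1 : unit_set (1 : R) by exists 1; split; rewrite mulr1.
apply: left_den_intro => //.
- by move=> [u [+ _]]; rewrite mulr0 => /eqP; rewrite eq_sym oner_eq0.
- move=> a b [u [ua au]] [v [vb bv]]; exists (v * u); split.
  + by rewrite mulrA -(mulrA v) ua mulr1.
  + by rewrite mulrA -(mulrA a) bv mulr1.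
- move=> r s [u [us _]]; exists 1, (r * u); split => //.
  by rewrite mul1r -mulrA us mulr1.
- move=> r s [u [_ su]] rs0; exists 1; split => //.
  by rewrite mul1r -(mulr1 r) -su mulrA rs0 mul0r.
Qed.

Lemma unit_set_ass (R : nzRingType) (r : R) : ass (@unit_set R) r -> r = 0.
Proof. by move=> [s [[u [us _]] sr0]]; rewrite -(mul1r r) -us -mulrA sr0 mulr0. Qed.

Lemma unit_sub_maxDen_l (R : nzRingType) (S : R -> Prop) :
  maxDen_l S -> forall u, unit_set u -> S u.
Proof. exact: regular_den_sub_maxDen_l (@unit_set_left_den R) (@unit_set_ass R). Qed.

Section DenominatorSetsOfLocalization.
Variables (R Q : nzRingType) (T : R -> Prop) (sigma : {rmorphism R -> Q}).
Hypotheses (HT : left_den T) (HassT : forall r, ass T r -> r = 0)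
  (Hloc : is_left_localization T sigma).

Lemma sigma_eq0 r : sigma r = 0 -> r = 0.
Proof. by move=> /(loc_ker Hloc); apply: HassT. Qed.

Lemma sigma_inj : injective sigma.
Proof. exact: raddf_inj sigma_eq0. Qed.

Lemma T_rreg t r : T t -> r * t = 0 -> r = 0.
Proof. by move=> Tt /(left_den_ann HT Tt) [t' [Tt' E]]; apply: HassT; exists t'. Qed.

Lemma preim_left_den (TT : Q -> Prop) : left_den TT ->
  (forall t, T t -> TT (sigma t)) -> left_den (preim_set sigma TT).
Proof.
move=> HTT sigmaT; rewrite /preim_set.
apply: left_den_intro.
- by rewrite rmorph1; apply: left_den1.
- by rewrite rmorph0; apply: left_den_neq0.
- by move=> a b Ha Hb; rewrite rmorphM; apply: left_denM.
- move=> r x Hx.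
  have [q1 [q2 [Hq1 E]]] := left_den_ore HTT (sigma r) Hx.
  have [t [a [b [Tt [Ea Eb]]]]] := loc_common_frac Hloc HT q1 q2.
  exists a, b; split; first by rewrite -Ea; apply: left_denM => //; apply: sigmaT.
  by apply: sigma_inj; rewrite !rmorphM -Ea -Eb -!mulrA E.
- move=> r x Hx rx0.
  have sigma_rx0 : sigma r * sigma x = 0 by rewrite -rmorphM rx0 rmorph0.
  have [q [Hq Eq]] := left_den_ann HTT Hx sigma_rx0.
  have [t [a [Tt Ea]]] := loc_frac Hloc q.
  exists a; split; first by rewrite -Ea; apply: left_denM => //; apply: sigmaT.
  by apply: sigma_eq0; rewrite rmorphM -Ea -mulrA Eq mulr0.
Qed.

(* The fractions sigma(t)^{-1} sigma(s); for maximal S this is tilde S. *)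
Definition frac_set (S : R -> Prop) (q : Q) : Prop :=
  exists t s, T t /\ S s /\ sigma t * q = sigma s.

Section MaximalDenominatorSet.
Variable S : R -> Prop.
Hypothesis HS : maxDen_l S.

Let HSd : left_den S := maxDen_l_den HS.

Lemma T_sub_S t : T t -> S t.
Proof. exact: regular_den_sub_maxDen_l HT HassT HS t. Qed.

Lemma S_cancelTl t r : T t -> S (t * r) -> S r.
Proof.
move=> Tt Str; apply: (maxDen_l_saturated HS Str) => x xr0.
have [t' [x' [Tt' E]]] := left_den_ore HT x Tt.
have [s' [Ss' E']] : exists s', S s' /\ s' * x' = 0.
  by apply: (left_den_ann HSd Str); rewrite mulrA -E -mulrA xr0 mulr0.
exists (s' * t'); split; first by apply: left_denM => //; apply: T_sub_S.
by rewrite -mulrA E mulrA E' mul0r.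
Qed.

Lemma S_cancelTr t x : T t -> S (x * t) -> S x.
Proof.
move=> Tt Sxt.
have [s [r [Ss E]]] := left_den_ore HSd t Sxt.
apply: (maxDen_l_saturated HS (y := r)).
  suff <- : s = r * x by [].
  apply/eqP; rewrite -subr_eq0; apply/eqP; apply: (T_rreg Tt).
  by rewrite mulrBl E mulrA subrr.
by move=> r' r'x0; apply: (left_den_ann HSd Sxt); rewrite mulrA r'x0 mul0r.
Qed.

Lemma frac_set_sigma s : S s -> frac_set S (sigma s).
Proof.
by move=> Ss; exists 1, s; rewrite rmorph1 mul1r; split => //; apply: left_den1.
Qed.

Lemma frac_setM a b : frac_set S a -> frac_set S b -> frac_set S (a * b).
Proof.
move=> [t1 [s1 [Tt1 [Ss1 E1]]]] [t2 [s2 [Tt2 [Ss2 E2]]]].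
have [t3 [r3 [Tt3 E3]]] := left_den_ore HT s1 Tt2.
have Sr3 : S r3.
  by apply: (S_cancelTr Tt2); rewrite -E3; apply: left_denM => //; apply: T_sub_S.
exists (t3 * t1), (r3 * s2); do !split; try exact: left_denM.
by rewrite rmorphM mulrA -(mulrA (sigma t3)) E1 -rmorphM E3 rmorphM -mulrA E2 -rmorphM.
Qed.

Lemma tildeE : tilde T S sigma = frac_set S.
Proof.
apply: functional_extensionality => q; apply: propositional_extensionality.
split.
- elim=> {q} [|s Ss|t u Tt [_ sigma_tu]|a b _ Ha _ Hb].
  + by rewrite -(rmorph1 sigma); exact/frac_set_sigma/(left_den1 HSd).
  + exact: frac_set_sigma.
  + exists t, 1; rewrite sigma_tu rmorph1.
    by do !split => //; apply: left_den1.
  + exact: frac_setM.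
- move=> [t [s [Tt [Ss E]]]].
  have [u [u_sigma sigma_u]] := loc_unit Hloc Tt.
  have -> : q = u * sigma s by rewrite -E mulrA u_sigma mul1r.
  by apply: tilde_mul; [apply: (@tilde_inv _ _ _ _ _ t) | apply: tilde_img].
Qed.

Lemma frac_set_numer t a q : frac_set S q -> T t -> sigma t * q = sigma a -> S a.
Proof.
move=> Hq Tt E.
have : frac_set S (sigma t * q) by apply: frac_setM => //; apply/frac_set_sigma/T_sub_S.
rewrite E => -[t0 [s0 [Tt0 [Ss0 E0]]]].
by apply: (S_cancelTl Tt0); rewrite (sigma_inj (etrans (rmorphM _ _ _) E0)).
Qed.

Lemma preim_frac_set r : preim_set sigma (frac_set S) r <-> S r.
Proof.
split; last exact: frac_set_sigma.
by move=> Hr; apply: (frac_set_numer Hr (left_den1 HT)); rewrite rmorph1 mul1r.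
Qed.

Lemma frac_set_left_den : left_den (frac_set S).
Proof.
apply: left_den_intro.
- by rewrite -(rmorph1 sigma); exact/frac_set_sigma/(left_den1 HSd).
- move=> [t [s [_ [Ss E]]]]; apply: (left_den_neq0 HSd).
  by rewrite -(@sigma_eq0 s) // -E mulr0.
- exact: frac_setM.
- move=> q x [t [s [Tt [Ss E]]]].
  have [t1 [r [Tt1 Eq]]] := loc_frac Hloc q.
  have [s2 [r2 [Ss2 E2]]] := left_den_ore HSd r Ss.
  exists (sigma (s2 * t1)), (sigma r2 * sigma t); split.
    by apply: frac_set_sigma; apply: left_denM => //; apply: T_sub_S.
  by rewrite rmorphM -mulrA Eq -rmorphM E2 rmorphM -E mulrA.
- move=> q x [t [s [Tt [Ss E]]]] qx0.
  have [t1 [r [Tt1 Eq]]] := loc_frac Hloc q.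
  have [t3 [r3 [Tt3 E3]]] := left_den_ore HT r Tt.
  have r3s0 : r3 * s = 0.
    apply: sigma_eq0; rewrite rmorphM -E mulrA -rmorphM -E3 rmorphM -Eq.
    by rewrite -!mulrA qx0 !mulr0.
  have [s' [Ss' E']] := left_den_ann HSd Ss r3s0.
  exists (sigma (s' * t3 * t1)); split.
    by apply: frac_set_sigma; do 2?apply: left_denM => //; apply: T_sub_S.
  by rewrite rmorphM -mulrA Eq -rmorphM -mulrA E3 mulrA E' mul0r rmorph0.
Qed.

Lemma frac_set_maxDen_l : maxDen_l (frac_set S).
Proof.
split; first exact: frac_set_left_den.
move=> TT HTT frac_sub q Hq.
have preim_sub r : preim_set sigma TT r -> S r.
  apply: (proj2 HS) => [|s Ss]; last exact/frac_sub/frac_set_sigma.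
  by apply: preim_left_den => // t Tt; apply/frac_sub/frac_set_sigma/T_sub_S.
have [t [a [Tt Ea]]] := loc_frac Hloc q.
exists t, a; do !split => //; apply: preim_sub; rewrite /preim_set -Ea.
by apply: left_denM HTT _ _ _ Hq; apply/frac_sub/frac_set_sigma/T_sub_S.
Qed.

Lemma localization_comp (B : nzRingType) (g : {rmorphism Q -> B}) :
  is_left_localization (frac_set S) g -> is_left_localization S (g \o sigma).
Proof.
move=> Hg; split; [|split].
- by move=> s Ss /=; apply: (loc_unit Hg); apply: frac_set_sigma.
- move=> b; have [x [q [Hx E]]] := loc_frac Hg b.
  have [t [a [c [Tt [Ea Ec]]]]] := loc_common_frac Hloc HT x q.
  exists a, c; split; first exact: frac_set_numer Hx Tt Ea.
  by rewrite /= -Ea -Ec !rmorphM -mulrA E.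
- move=> r /=; split.
  + move/(loc_ker Hg) => [x [[t [s [Tt [Ss E]]]] Ex]].
    exists s; split => //; apply: sigma_eq0.
    by rewrite rmorphM -E -mulrA Ex mulr0.
  + move=> [s [Ss E]]; apply/(loc_ker Hg); exists (sigma s).
    by split; [apply: frac_set_sigma | rewrite -rmorphM E rmorph0].
Qed.

End MaximalDenominatorSet.

Section MaximalDenominatorSetOfLocalization.
Variable TT : Q -> Prop.
Hypothesis HTT : maxDen_l TT.

Lemma sigmaT_sub_TT t : T t -> TT (sigma t).
Proof.
move=> Tt; apply: (unit_sub_maxDen_l HTT).
by have [u [u_sigma sigma_u]] := loc_unit Hloc Tt; exists u.
Qed.

Definition sigma_image (S : R -> Prop) (q : Q) : Prop := exists s, S s /\ q = sigma s.

Lemma gen_sigma_image_left_den (S : R -> Prop) : left_den S ->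
  (forall r, preim_set sigma TT r -> S r) -> left_den (gen_monoid TT (sigma_image S)).
Proof.
move=> HS preim_sub; have HTTd := maxDen_l_den HTT.
apply: (@gen_monoid_left_den _ TT (sigma_image S) (sigma_image S)).
- by exists 1; rewrite rmorph1; split => //; apply: left_den1.
- move=> [s [Ss /esym/sigma_eq0 s0]]; apply: (left_den_neq0 HS).
  by rewrite -s0.
- move=> _ _ [s1 [Ss1 ->]] [s2 [Ss2 ->]].
  by exists (s1 * s2); rewrite rmorphM; split => //; apply: left_denM.
- by move=> w Hw; apply: gen_monoidr.
- move=> x [Hx|[s [Ss ->]]] q.
  + have [m [r' [Hm E]]] := left_den_ore HTTd q Hx.
    by exists m, r'; split => //; apply: gen_monoidl.
  + have [t [r [Tt Eq]]] := loc_frac Hloc q.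
    have [s2 [r2 [Ss2 E2]]] := left_den_ore HS r Ss.
    exists (sigma s2 * sigma t), (sigma r2); split.
      apply: gen_monoidM; [apply: gen_monoidr; exists s2 |]; first by [].
      by apply/gen_monoidl/sigmaT_sub_TT.
    by rewrite -mulrA Eq -!rmorphM E2.
- move=> x [Hx|[s [Ss ->]]] q qx0.
  + have [y [Hy Ey]] := left_den_ann HTTd Hx qx0.
    have [t [a [Tt Ea]]] := loc_frac Hloc y.
    exists (sigma a); split; last by rewrite -Ea -mulrA Ey mulr0.
    exists a; split => //; apply: preim_sub; rewrite /preim_set -Ea.
    by apply: left_denM HTTd _ _ _ Hy; apply: sigmaT_sub_TT.
  + have [t [r [Tt Eq]]] := loc_frac Hloc q.
    have rs0 : r * s = 0 by apply: sigma_eq0; rewrite rmorphM -Eq -mulrA qx0 mulr0.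
    have [s2 [Ss2 E2]] := left_den_ann HS Ss rs0.
    exists (sigma (s2 * t)); split; last by rewrite rmorphM -mulrA Eq -rmorphM E2 rmorph0.
    exists (s2 * t); split => //; apply: left_denM => //.
    by apply/preim_sub/sigmaT_sub_TT.
Qed.

Lemma preim_maxDen_l : maxDen_l (preim_set sigma TT).
Proof.
split; first exact: preim_left_den (maxDen_l_den HTT) sigmaT_sub_TT.
move=> S HS preim_sub s Ss.
have TT_gen := proj2 HTT _ (gen_sigma_image_left_den HS preim_sub) (@gen_monoidl _ _ _).
by apply: TT_gen; apply: gen_monoidr; exists s.
Qed.

Lemma frac_set_preim q : frac_set (preim_set sigma TT) q <-> TT q.
Proof.
have HTTd := maxDen_l_den HTT.
split.
- move=> [t [s [Tt [Hs E]]]]; have [u [u_sigma sigma_u]] := loc_unit Hloc Tt.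
  have -> : q = u * sigma s by rewrite -E mulrA u_sigma mul1r.
  apply: left_denM HTTd _ _ _ Hs; apply: (unit_sub_maxDen_l HTT).
  by exists (sigma t); split.
- move=> Hq; have [t [a [Tt Ea]]] := loc_frac Hloc q.
  exists t, a; do !split => //; rewrite /preim_set -Ea.
  by apply: left_denM HTTd _ _ _ Hq; apply: sigmaT_sub_TT.
Qed.

End MaximalDenominatorSetOfLocalization.

End DenominatorSetsOfLocalization.

Theorem theorem3p11 (R : nzRingType) (T : R -> Prop)
  (Q : nzRingType) (sigma : {rmorphism R -> Q}) :
  left_den T ->
  (forall r, ass T r -> r = 0) ->
  is_left_localization T sigma ->
  (* (1) *)
  (forall S : R -> Prop, maxDen_l S -> forall t, T t -> S t) /\
  (* (2) S |-> tilde S maps maxDen_l(R) into maxDen_l(T^{-1}R), and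
     sigma^{-1} is a left inverse of it *)
  (forall S : R -> Prop, maxDen_l S ->
     maxDen_l (tilde T S sigma) /\
     (forall r, preim_set sigma (tilde T S sigma) r <-> S r)) /\
  (* TT |-> sigma^{-1}(TT) maps maxDen_l(T^{-1}R) into maxDen_l(R), and
     tilde is a left inverse of it *)
  (forall TT : Q -> Prop, maxDen_l TT ->
     maxDen_l (preim_set sigma TT) /\
     (forall q, tilde T (preim_set sigma TT) sigma q <-> TT q)) /\
  (* S^{-1}R is isomorphic to (tilde S)^{-1}(T^{-1}R) *)
  (forall S : R -> Prop, maxDen_l S ->
     forall (A : nzRingType) (f : {rmorphism R -> A})
            (B : nzRingType) (g : {rmorphism Q -> B}),
       is_left_localization S f ->
       is_left_localization (tilde T S sigma) g ->
       exists h : {rmorphism A -> B}, bijective h).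
Proof.
move=> HT HassT Hloc.
split; first by move=> S HS; apply: regular_den_sub_maxDen_l.
split.
  move=> S HS; rewrite tildeE //.
  by split; [apply: frac_set_maxDen_l | apply: preim_frac_set].
split.
  move=> TT HTT; have HpTT := preim_maxDen_l HT HassT Hloc HTT.
  by split => // q; rewrite tildeE //; apply: frac_set_preim.
move=> S HS A f B g Hf; rewrite tildeE // => Hg.
have Hgsigma := localization_comp HT HassT Hloc HS Hg.
exact: left_localization_unique (maxDen_l_den HS) Hf Hgsigma.
Qed.
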